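(* The trilinear form on $\mathrm{Vect}\,S^1$ $$\beta_1(L,F,G)=\int_{S^1} l'(\varphi)\,\big(f'(\varphi)g''(\varphi)-f''(\varphi)g'(\varphi)\big)\,d\varphi,$$ where $L=l\frac{d}{d\varphi}$, $F=f\frac d{d\varphi}$, $G=g\frac d{d\varphi}$, is a continuous Leibniz $3$-cocycle on $\mathrm{Vect}\,S^1$ supported on the diagonal of $(S^1)^3$, i.e. $d\beta_1=0$ for the Leibniz coboundary.
   Context: $\mathrm{Vect}\,S^1$ is the Lie algebra of smooth vector fields on $S^1$ (coordinate $\varphi$), with bracket $[f\frac d{d\varphi},g\frac d{d\varphi}]=(fg'-f'g)\frac d{d\varphi}$. The Leibniz coboundary of a $3$-cochain $c$ is $dc(x_1,x_2,x_3,x_4)=\sum_{i<j}(-1)^{j+1}c(x_1,\dots,x_{i-1},[x_i,x_j],x_{i+1},\dots,\widehat{x_j},\dots,x_4)$. *)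

From Stdlib Require Import Reals.
From Coquelicot Require Import Coquelicot.
Open Scope R_scope.

(* A smooth function on S^1 = R / 2*PI*Z, represented as a 2*PI-periodic
   function R -> R having derivatives of all orders everywhere.
   A vector field f d/dphi on S^1 is identified with its coefficient f. *)
Definition smooth_S1 (f : R -> R) : Prop :=
  (forall (n : nat) (x : R), ex_derive_n f n x) /\
  (forall x : R, f (x + 2 * PI) = f x).

(* Lie bracket of Vect S^1: [f d/dphi, g d/dphi] = (f g' - f' g) d/dphi. *)
Definition vbracket (f g : R -> R) : R -> R :=
  fun x => f x * Derive g x - Derive f x * g x.

Definition cochain3 := (R -> R) -> (R -> R) -> (R -> R) -> R.

(* Leibniz coboundary of a 3-cochain, written out from
   dc(x1,..,x4) = sum_{i<j} (-1)^(j+1) c(x1,..,x_{i-1},[x_i,x_j],x_{i+1},..,^x_j,..,x4). *)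
Definition leibniz_d3 (c : cochain3) (x1 x2 x3 x4 : R -> R) : R :=
    - c (vbracket x1 x2) x3 x4            (* i=1, j=2 *)
    + c (vbracket x1 x3) x2 x4            (* i=1, j=3 *)
    - c (vbracket x1 x4) x2 x3            (* i=1, j=4 *)
    + c x1 (vbracket x2 x3) x4            (* i=2, j=3 *)
    - c x1 (vbracket x2 x4) x3            (* i=2, j=4 *)
    - c x1 x2 (vbracket x3 x4).           (* i=3, j=4 *)

Definition beta1 : cochain3 := fun l f g =>
  RInt (fun x => Derive l x *
                 (Derive f x * Derive_n g 2 x - Derive_n f 2 x * Derive g x))
       0 (2 * PI).

From Stdlib Require Import Reals.
From Coquelicot Require Import Coquelicot.
Open Scope R_scope.

(* Let W(b,c,d) be the Wronskian det [b c d; b' c' d'; b'' c'' d''].  Since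
   [f,g]' = f g'' - f'' g, the six terms of (d beta1)(a,b,c,d) combine
   pointwise into the exact derivative (a' W(b,c,d))'; as a' W(b,c,d) is
   2*PI-periodic, its derivative integrates to zero over a period. *)

Lemma smooth_S1_ex_derive (f : R -> R) (x : R) : smooth_S1 f -> ex_derive f x.
Proof. intros [Hd _]. exact (Hd 1%nat x). Qed.

Lemma smooth_S1_continuous (f : R -> R) (x : R) : smooth_S1 f -> continuous f x.
Proof.
  intros Hf. apply (ex_derive_continuous (K:=R_AbsRing) (V:=R_NormedModule)).
  now apply smooth_S1_ex_derive.
Qed.

Lemma Derive_periodic (f : R -> R) (T : R) :
  (forall x, ex_derive f x) -> (forall x, f (x + T) = f x) ->
  forall x, Derive f (x + T) = Derive f x.
Proof.
  intros Hd Hp x.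
  transitivity (Derive (fun y => f (y + T)) x).
  - rewrite (Derive_comp f (fun y => y + T)); auto.
    + replace (Derive (fun y => y + T) x) with 1; [ring|].
      symmetry; apply is_derive_unique; auto_derive; auto; ring.
    + auto_derive; auto.
  - apply Derive_ext; intro; apply Hp.
Qed.

Lemma smooth_S1_Derive (f : R -> R) : smooth_S1 f -> smooth_S1 (Derive f).
Proof.
  intros [Hd Hp]; split.
  - intros [|n] x; [exact I|].
    apply (ex_derive_ext (Derive_n f (S n))); [|exact (Hd (S (S n)) x)].
    intro y; rewrite <- Nat.add_1_r, <- (Derive_n_comp f n 1); reflexivity.
  - apply Derive_periodic; [intro; exact (Hd 1%nat _)|exact Hp].
Qed.

Lemma smooth_S1_periodic (f : R -> R) (x : R) : smooth_S1 f -> f (x + 2 * PI) = f x.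
Proof. intros [_ Hp]; apply Hp. Qed.

#[local] Hint Resolve smooth_S1_ex_derive smooth_S1_continuous smooth_S1_Derive : core.

(* [auto_derive] leaves eta-expanded [fun y => f y], which [ring] would treat
   as an atom distinct from [f]. *)
Ltac eta_reduce :=
  repeat match goal with |- context [fun y => ?h y] => change (fun y => h y) with h end.

Ltac split_continuous :=
  repeat match goal with
  | |- continuous (fun _ => _ * _) _ => apply (continuous_mult (K:=R_AbsRing))
  | |- continuous (fun _ => _ - _) _ => apply (continuous_minus (V:=R_NormedModule))
  | |- continuous (fun _ => _ + _) _ => apply (continuous_plus (V:=R_NormedModule))
  | |- continuous (fun _ => - _) _ => apply (continuous_opp (V:=R_NormedModule))
  end.

Lemma Derive_vbracket (f g : R -> R) (x : R) : smooth_S1 f -> smooth_S1 g ->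
  Derive (vbracket f g) x = f x * Derive (Derive g) x - Derive (Derive f) x * g x.
Proof.
  intros Hf Hg; apply is_derive_unique; unfold vbracket.
  auto_derive; [repeat split; auto | eta_reduce; ring].
Qed.

Lemma Derive2_vbracket (f g : R -> R) (x : R) : smooth_S1 f -> smooth_S1 g ->
  Derive (Derive (vbracket f g)) x =
  Derive f x * Derive (Derive g) x + f x * Derive (Derive (Derive g)) x
  - Derive (Derive (Derive f)) x * g x - Derive (Derive f) x * Derive g x.
Proof.
  intros Hf Hg.
  rewrite (Derive_ext _ (fun y => f y * Derive (Derive g) y - Derive (Derive f) y * g y))
    by (intro; apply Derive_vbracket; auto).
  apply is_derive_unique; auto_derive; [repeat split; auto | eta_reduce; ring].
Qed.

Definition Derive12_continuous (f : R -> R) : Prop :=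
  forall x, continuous (Derive f) x /\ continuous (Derive (Derive f)) x.

Lemma smooth_S1_Derive12_continuous (f : R -> R) :
  smooth_S1 f -> Derive12_continuous f.
Proof. intros Hf x; split; auto. Qed.

Lemma vbracket_Derive12_continuous (f g : R -> R) :
  smooth_S1 f -> smooth_S1 g -> Derive12_continuous (vbracket f g).
Proof.
  intros Hf Hg x; split.
  - apply (continuous_ext (fun y => f y * Derive (Derive g) y - Derive (Derive f) y * g y)).
    + intro; symmetry; apply Derive_vbracket; auto.
    + split_continuous; auto.
  - apply (continuous_ext (fun y =>
      Derive f y * Derive (Derive g) y + f y * Derive (Derive (Derive g)) y
      - Derive (Derive (Derive f)) y * g y - Derive (Derive f) y * Derive g y)).
    + intro; symmetry; apply Derive2_vbracket; auto.
    + split_continuous; auto.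
Qed.

(* [beta1 l f g] is convertibly the integral of this density over [0, 2*PI]:
   [Derive_n g 2] unfolds to [Derive (Derive g)]. *)
Definition beta1_density (l f g : R -> R) (x : R) : R :=
  Derive l x * (Derive f x * Derive (Derive g) x - Derive (Derive f) x * Derive g x).

Lemma beta1_density_continuous (l f g : R -> R) (x : R) :
  Derive12_continuous l -> Derive12_continuous f -> Derive12_continuous g ->
  continuous (beta1_density l f g) x.
Proof.
  intros Hl Hf Hg; destruct (Hl x), (Hf x), (Hg x).
  unfold beta1_density; split_continuous; auto.
Qed.

Lemma is_RInt_beta1 (l f g : R -> R) :
  Derive12_continuous l -> Derive12_continuous f -> Derive12_continuous g ->
  is_RInt (beta1_density l f g) 0 (2 * PI) (beta1 l f g).
Proof.
  intros Hl Hf Hg.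
  apply (RInt_correct (V:=R_CompleteNormedModule)).
  apply (ex_RInt_continuous (V:=R_CompleteNormedModule)).
  intros x _; now apply beta1_density_continuous.
Qed.

Lemma is_RInt_leibniz_d3_beta1 (a b c d : R -> R) :
  smooth_S1 a -> smooth_S1 b -> smooth_S1 c -> smooth_S1 d ->
  is_RInt (fun x => leibniz_d3 (fun l f g => beta1_density l f g x) a b c d)
    0 (2 * PI) (leibniz_d3 beta1 a b c d).
Proof.
  intros Ha Hb Hc Hd; unfold leibniz_d3.
  repeat match goal with
  | |- is_RInt (fun _ => _ - _) _ _ _ => apply (is_RInt_minus (V:=R_NormedModule))
  | |- is_RInt (fun _ => _ + _) _ _ _ => apply (is_RInt_plus (V:=R_NormedModule))
  | |- is_RInt (fun _ => - _) _ _ _ => apply (is_RInt_opp (V:=R_NormedModule))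
  end; apply is_RInt_beta1;
    auto using smooth_S1_Derive12_continuous, vbracket_Derive12_continuous.
Qed.

Lemma leibniz_d3_beta1_density_continuous (a b c d : R -> R) (x : R) :
  smooth_S1 a -> smooth_S1 b -> smooth_S1 c -> smooth_S1 d ->
  continuous (fun y => leibniz_d3 (fun l f g => beta1_density l f g y) a b c d) x.
Proof.
  intros Ha Hb Hc Hd; unfold leibniz_d3; split_continuous;
    apply beta1_density_continuous;
    auto using smooth_S1_Derive12_continuous, vbracket_Derive12_continuous.
Qed.

Definition wronskian3 (f g h : R -> R) (x : R) : R :=
  f x * (Derive g x * Derive (Derive h) x - Derive (Derive g) x * Derive h x)
  - Derive f x * (g x * Derive (Derive h) x - Derive (Derive g) x * h x)
  + Derive (Derive f) x * (g x * Derive h x - Derive g x * h x).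

Lemma is_derive_Derive_mult_wronskian3 (a b c d : R -> R) (x : R) :
  smooth_S1 a -> smooth_S1 b -> smooth_S1 c -> smooth_S1 d ->
  is_derive (fun y => Derive a y * wronskian3 b c d y) x
    (leibniz_d3 (fun l f g => beta1_density l f g x) a b c d).
Proof.
  intros Ha Hb Hc Hd; unfold wronskian3.
  auto_derive; [repeat split; auto|].
  eta_reduce; unfold leibniz_d3, beta1_density.
  rewrite ?Derive2_vbracket, ?Derive_vbracket by auto.
  ring.
Qed.

Lemma is_RInt_derive_periodic (h dh : R -> R) (T : R) :
  (forall x, is_derive h x (dh x)) -> (forall x, continuous dh x) ->
  h T = h 0 -> is_RInt dh 0 T 0.
Proof.
  intros Hd Hc Hp.
  pose proof (is_RInt_derive (V:=R_CompleteNormedModule) h dh 0 T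
    (fun x _ => Hd x) (fun x _ => Hc x)) as HI.
  rewrite Hp, minus_eq_zero in HI; exact HI.
Qed.

Theorem mainTheorem5 :
  forall x1 x2 x3 x4 : R -> R,
    smooth_S1 x1 -> smooth_S1 x2 -> smooth_S1 x3 -> smooth_S1 x4 ->
    leibniz_d3 beta1 x1 x2 x3 x4 = 0.
Proof.
  intros a b c d Ha Hb Hc Hd.
  assert (Hdensity := is_RInt_leibniz_d3_beta1 a b c d Ha Hb Hc Hd).
  assert (Hexact : is_RInt (fun x => leibniz_d3 (fun l f g => beta1_density l f g x) a b c d)
                     0 (2 * PI) 0).
  { apply (is_RInt_derive_periodic (fun y => Derive a y * wronskian3 b c d y)).
    - intro x; apply is_derive_Derive_mult_wronskian3; assumption.
    - intro x; apply leibniz_d3_beta1_density_continuous; assumption.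
    - replace (2 * PI) with (0 + 2 * PI) by ring; unfold wronskian3.
      rewrite !smooth_S1_periodic; auto. }
  apply (is_RInt_unique (V:=R_CompleteNormedModule)) in Hdensity, Hexact.
  congruence.
Qed.
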